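(* Let $F\subseteq\mathbf I$ be finite with $\emptyset\notin F$, and set $f=\sum_{\mathbf i\in F}\delta_{s_{\mathbf i}^*}\in\mathcal A$. Then $\|\pi_{\mathcal J}(f)\|=|F|$ (quotient norm in $\mathcal A/\mathcal J$).
   Context: Let $\mathrm{Cu}_2$ be the involutive monoid with identity $e$ and zero element $\lozenge$ (so $\lozenge t=\lozenge=t\lozenge$ for all $t$), generated by $s_1,s_2,s_1^*,s_2^*$ subject to $s_1^*s_1=e=s_2^*s_2$ and $s_1^*s_2=\lozenge=s_2^*s_1$, with involution $t\mapsto t^*$ satisfying $(t^* )^*=t$, $(tu)^*=u^*t^*$. Let $\mathbf I_0=\{\emptyset\}$, $\mathbf I_n=\{1,2\}^n$, $\mathbf I=\bigcup_{n\ge0}\mathbf I_n$ (finite words). For $\mathbf i=(i_1,\dots,i_k)\in\mathbf I$ put $s_{\mathbf i}=s_{i_1}\cdots s_{i_k}$ ($s_\emptyset=e$) and $s_{\mathbf i}^*=(s_{\mathbf i})^*$. Let $\mathcal A=\ell^1(\mathrm{Cu}_2\setminus\{\lozenge\})$ with product $\#$ determined by bilinearity and continuity from $\delta_s\#\delta_t=\delta_{st}$ if $st\neq\lozenge$ and $\delta_s\#\delta_t=0$ if $st=\lozenge$. Let $f_0=\delta_e-\delta_{s_1s_1^*}-\delta_{s_2s_2^*}$, let $\mathcal J$ be the closed two-sided ideal of $\mathcal A$ generated by $f_0$, and let $\pi_{\mathcal J}:\mathcal A\to\mathcal A/\mathcal J$ be the quotient map. *)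

From HB Require Import structures.
From mathcomp Require Import all_boot all_order all_algebra.
From mathcomp Require Import all_classical all_reals.
From mathcomp Require Import topology normedtype sequences esum.
From mathcomp Require Import complex.
Set Implicit Arguments. Unset Strict Implicit. Unset Printing Implicit Defensive.
Import Order.TTheory GRing.Theory Num.Theory.
Local Open Scope classical_set_scope.
Local Open Scope ring_scope.

(* Words over the alphabet {1,2}: the letter 1 is encoded by [false],
   the letter 2 by [true]. *)
Definition word := seq bool.

(* Nonzero elements of Cu_2 in normal form: (mu, nu) stands for s_mu s_nu^*. *)
Definition cu2 := (word * word)%type.

(* Product in Cu_2 \ {lozenge}; [None] means the product is the zero element.
   ( s_mu s_nu^* ) ( s_al s_be^* ) = s_(mu ga) s_be^*     if al = nu ga,
                                   = s_mu ( s_(be ga) )^* if nu = al ga,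
                                   = lozenge              otherwise. *)
Definition cu2_mul (x y : cu2) : option cu2 :=
  let: (mu, nu) := x in let: (al, be) := y in
  if prefix nu al then Some (mu ++ drop (size nu) al, be)
  else if prefix al nu then Some (mu, be ++ drop (size al) nu)
  else None.

Definition cu2_e : cu2 := ([::], [::]).
Definition cu2_sstar (w : word) : cu2 := ([::], w).
Definition cu2_proj (w : word) : cu2 := (w, w).

Section L1.
Variable R : realType.
Local Notation C := R[i].

Definition rsum (T : choiceType) (D : set T) (u : T -> R) : R :=
  fine (\esum_(x in D) (Num.max (u x) 0)%:E)%E
  - fine (\esum_(x in D) (Num.max (- u x) 0)%:E)%E.

Definition csum (T : choiceType) (D : set T) (u : T -> C) : C :=
  Complex (rsum D (fun x => complex.Re (u x))) (rsum D (fun x => complex.Im (u x))).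

Definition l1 (a : cu2 -> C) : Prop :=
  (\esum_(x in [set: cu2]) (Normc.normc (a x))%:E < +oo)%E.

Definition l1norm (a : cu2 -> C) : R :=
  fine (\esum_(x in [set: cu2]) (Normc.normc (a x))%:E)%E.

Definition delta (s : cu2) : cu2 -> C := fun t => (t == s)%:R.

Definition conv (a b : cu2 -> C) : cu2 -> C := fun z =>
  csum [set p : cu2 * cu2 | cu2_mul p.1 p.2 = Some z] (fun p => a p.1 * b p.2).

Definition closed_ideal (I : set (cu2 -> C)) : Prop :=
  [/\ I `<=` l1,
      I (fun _ => 0) /\
      (forall g h, I g -> I h -> I (fun t => g t + h t)),
      (forall (c : C) g, I g -> I (fun t => c * g t)),
      (forall a g, l1 a -> I g -> I (conv a g) /\ I (conv g a))
    & (forall a, l1 a ->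
         (forall eps : R, 0 < eps -> exists2 g, I g & l1norm (fun t => a t - g t) < eps) ->
         I a)].

Definition f0 : cu2 -> C := fun t =>
  delta cu2_e t - delta (cu2_proj [:: false]) t - delta (cu2_proj [:: true]) t.

Definition Jideal : set (cu2 -> C) :=
  [set g | forall I, closed_ideal I -> I f0 -> I g].

Definition quot_norm (a : cu2 -> C) : R :=
  inf [set l1norm (fun t => a t - g t) | g in Jideal].

End L1.

(* Cu_2 acts on functions phi on the Cantor space {1,2}^N: s_mu s_nu^*
   sends phi to y |-> phi (nu sigma^|mu| y) when mu is a prefix of y and to 0
   otherwise (sigma being the shift).  This action is multiplicative and
   satisfies e = s_1 s_1^* + s_2 s_2^*.  Summing it against a in A yields a
   contractive representation pi of A on bounded functions, so its kernel K is
   a closed two-sided ideal containing f0, whence J is contained in K.  The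
   functional a |-> Re (pi(a) 1)(y) has norm at most 1, vanishes on J and takes
   the value |F| at f; hence ||f - g|| >= |F| for every g in J, while
   ||f|| <= |F| by the triangle inequality. *)

From HB Require Import structures.
From mathcomp Require Import all_boot all_order all_algebra.
From mathcomp Require Import all_classical all_reals.
From mathcomp Require Import topology normedtype sequences esum.
From mathcomp Require Import complex.
From mathcomp Require Import ring lra zify ereal.
Set Implicit Arguments. Unset Strict Implicit. Unset Printing Implicit Defensive.
Import Order.TTheory GRing.Theory Num.Theory.
Local Open Scope classical_set_scope.
Local Open Scope ring_scope.

(* ** Absolutely summable real families. *)

Local Notation rpos r := (Num.max r 0).
Local Notation rneg r := (Num.max (- r) 0).

Section RealSums.
Variables (R : realType) (T : choiceType).
Implicit Types (D E : set T) (u v p q : T -> R).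

Lemma rpos_ge0 (r : R) : 0 <= rpos r.
Proof. by rewrite le_max lexx orbT. Qed.

Lemma rpos_le_norm (r : R) : rpos r <= `|r|.
Proof. by rewrite ge_max normr_ge0 ler_norm. Qed.

Lemma rneg_le_norm (r : R) : rneg r <= `|r|.
Proof. by rewrite -normrN rpos_le_norm. Qed.

Lemma rpos_sub_rneg (r : R) : rpos r - rneg r = r.
Proof.
have [r0|r0] := leP 0 r; first by rewrite max_r ?subr0 // oppr_le0.
by rewrite max_l ?sub0r ?opprK // oppr_ge0 ltW.
Qed.

Lemma rpos_add_rneg (r : R) : rpos r + rneg r = `|r|.
Proof.
have [r0|r0] := leP 0 r; first by rewrite max_r ?addr0 ?ger0_norm // oppr_le0.
by rewrite max_l ?add0r ?ltr0_norm // oppr_ge0 ltW.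
Qed.

Lemma esumZl D (a : T -> R) (r : R) : (forall x, 0 <= a x) -> 0 <= r ->
  (\esum_(x in D) (r * a x)%:E = r%:E * \esum_(x in D) (a x)%:E)%E.
Proof.
move=> a0 r0; rewrite /esum -ereal_supZl //; last first.
  by apply/set0P; exists 0%E; exists set0; [exact: fsets_set0|rewrite fsbig_set0].
congr ereal_sup; apply/seteqP; split=> y /=.
  case=> A hA <-; exists (\sum_(x \in A) (a x)%:E)%E; first by exists A.
  by rewrite ge0_mule_fsumr // => i; rewrite lee_fin.
case=> z [A hA <-] <-; exists A => //.
by rewrite ge0_mule_fsumr // => i; rewrite lee_fin.
Qed.

Lemma esum_subset D E (a : T -> \bar R) : E `<=` D -> (forall x, 0 <= a x)%E ->
  (\esum_(x in E) a x <= \esum_(x in D) a x)%E.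
Proof.
move=> ED a0; rewrite (esum_mkcond E) (esum_mkcond D); apply: le_esum => x _.
case: ifP => //; case: ifP => // /negbT; rewrite notin_setE => nD.
by rewrite inE => /ED.
Qed.

Lemma esum_fin_num D (a : T -> R) : (forall x, D x -> 0 <= a x) ->
  (\esum_(x in D) (a x)%:E < +oo)%E -> (\esum_(x in D) (a x)%:E)%E \is a fin_num.
Proof.
by move=> a0 h; rewrite ge0_fin_numE // esum_ge0 // => x Dx; rewrite lee_fin a0.
Qed.

Lemma fine_esum_ge0 D (a : T -> R) : (forall x, D x -> 0 <= a x) ->
  0 <= fine (\esum_(x in D) (a x)%:E)%E.
Proof. by move=> a0; rewrite fine_ge0 // esum_ge0 // => x Dx; rewrite lee_fin a0. Qed.

Lemma esum_single (a : T -> \bar R) x : (forall t, 0 <= a t)%E ->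
  (forall t, t != x -> a t = 0%E) -> (\esum_(t in [set: T]) a t = a x)%E.
Proof.
move=> a0 ha; rewrite (esumID [set x]) // setTI esum_set1 // esum1 ?adde0 //.
by move=> t [_ /eqP /ha].
Qed.

Lemma esum_blocks (Z : choiceType) D (a : T -> \bar R) (k : T -> Z) :
  (forall x, 0 <= a x)%E ->
  (\esum_(x in D) a x =
   \esum_(z in [set: Z]) \esum_(x in D `&` (fun x => k x = z)) a x)%E.
Proof.
move=> a0; rewrite (esum_esum (I := [set: Z]) (J := fun z => D `&` (fun x => k x = z))
  (a := fun _ x => a x)); last by move=> *; apply: a0.
rewrite (reindex_esum D _ (fun x => (k x, x))) //; split.
- by move=> x Dx /=; split.
- by move=> x y _ _ [].
- by move=> [z x] /= [_ [Dx <-]]; exists x.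
Qed.

Definition rsummable D u := (\esum_(x in D) (`|u x|)%:E < +oo)%E.

Lemma rsummable_le D u v :
  (forall x, D x -> `|u x| <= `|v x|) -> rsummable D v -> rsummable D u.
Proof. by move=> h; apply: le_lt_trans; apply: le_esum => x Dx; rewrite lee_fin h. Qed.

Lemma rsummable0 D : rsummable D (fun _ => 0).
Proof. by rewrite /rsummable (eq_esum (b := fun _ => 0%E)) ?esum1 // => x _; rewrite normr0. Qed.

Lemma rsummableD D u v : rsummable D u -> rsummable D v ->
  rsummable D (fun x => u x + v x).
Proof.
move=> su sv; rewrite /rsummable.
apply: le_lt_trans (_ : (\esum_(x in D) ((`|u x|)%:E + (`|v x|)%:E) < +oo)%E).
  by apply: le_esum => x _; rewrite -EFinD lee_fin ler_normD.
by rewrite esumD ?lte_add_pinfty // => x _; rewrite lee_fin.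
Qed.

Lemma rsummableZ D u c : rsummable D u -> rsummable D (fun x => c * u x).
Proof.
move=> su; rewrite /rsummable (eq_esum (b := fun x => (`|c| * `|u x|)%:E)); last first.
  by move=> x _; rewrite normrM.
rewrite esumZl //; by apply: lte_mul_pinfty => //; rewrite lee_fin.
Qed.

Lemma rsummable_pos D u : rsummable D u -> rsummable D (fun x => rpos (u x)).
Proof. by apply: rsummable_le => x _; rewrite ger0_norm ?rpos_ge0 ?rpos_le_norm. Qed.

Lemma rsummable_neg D u : rsummable D u -> rsummable D (fun x => rneg (u x)).
Proof. by apply: rsummable_le => x _; rewrite ger0_norm ?rpos_ge0 ?rneg_le_norm. Qed.

Lemma rsummable_fin D u : (forall x, D x -> 0 <= u x) -> rsummable D u ->
  (\esum_(x in D) (u x)%:E)%E \is a fin_num.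
Proof.
move=> u0 su; apply: esum_fin_num => [x /u0 //|]; apply: le_lt_trans su.
by apply: le_esum => x Dx; rewrite lee_fin ger0_norm // u0.
Qed.

Lemma fine_esum_blocks (Z : choiceType) D (a : T -> R) (k : T -> Z) :
  (forall x, 0 <= a x) -> rsummable D a ->
  (\esum_(z in [set: Z]) (fine (\esum_(x in D `&` (fun x => k x = z)) (a x)%:E))%:E =
   \esum_(x in D) (a x)%:E)%E.
Proof.
move=> a0 sa; rewrite (esum_blocks D k); last by move=> x; rewrite lee_fin.
apply: eq_esum => z _; rewrite fineK //; apply: rsummable_fin => [x _|]; first exact: a0.
by apply: le_lt_trans sa; apply: esum_subset => [x []//|x]; rewrite lee_fin.
Qed.

(* The sum can be computed from any decomposition [u = p - q] into
   nonnegative summable families: this is the basic tool for all the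
   algebraic properties of [rsum]. *)
Lemma rsum_repr D u p q :
  (forall x, D x -> 0 <= p x) -> (forall x, D x -> 0 <= q x) ->
  rsummable D p -> rsummable D q -> (forall x, D x -> u x = p x - q x) ->
  rsum D u = fine (\esum_(x in D) (p x)%:E)%E - fine (\esum_(x in D) (q x)%:E)%E.
Proof.
move=> p0 q0 sp sq e.
have fp := rsummable_fin p0 sp; have fq := rsummable_fin q0 sq.
have su : rsummable D u.
  apply: rsummable_le (rsummableD sp sq) => x Dx.
  by rewrite e // (le_trans (ler_normB _ _)) // !ger0_norm ?addr_ge0 ?p0 ?q0.
have key : (\esum_(x in D) (rpos (u x))%:E + \esum_(x in D) (q x)%:E =
            \esum_(x in D) (rneg (u x))%:E + \esum_(x in D) (p x)%:E)%E.
  rewrite -!esumD; last 4 first.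
    1-4: by move=> x Dx; rewrite lee_fin ?rpos_ge0 ?p0 ?q0.
  apply: eq_esum => x Dx; rewrite -!EFinD; congr (_%:E).
  by have := rpos_sub_rneg (u x); rewrite e //; lra.
have fpos := rsummable_fin (fun x _ => rpos_ge0 (u x)) (rsummable_pos su).
have fneg := rsummable_fin (fun x _ => rpos_ge0 (- u x)) (rsummable_neg su).
by have := congr1 fine key; rewrite !fineD // /rsum; lra.
Qed.

Lemma rsum_ext D u v : (forall x, D x -> u x = v x) -> rsum D u = rsum D v.
Proof. by move=> e; rewrite /rsum; congr (fine _ - fine _); apply: eq_esum => x Dx; rewrite e. Qed.

Lemma rsum_nneg D u : (forall x, D x -> 0 <= u x) -> rsummable D u ->
  rsum D u = fine (\esum_(x in D) (u x)%:E)%E.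
Proof.
move=> u0 su.
have := @rsum_repr D u u (fun _ => 0) u0 (fun x _ => lexx 0) su (rsummable0 D).
by rewrite (@esum1 _ _ D (fun=> 0%E)) //= subr0 => ->// x _; rewrite subr0.
Qed.

Lemma rsum0 D : rsum D (fun _ => 0 : R) = 0.
Proof. by rewrite rsum_nneg ?esum1 //; exact: rsummable0. Qed.

Lemma rsum_add D u v : rsummable D u -> rsummable D v ->
  rsum D (fun x => u x + v x) = rsum D u + rsum D v.
Proof.
move=> su sv.
have [spu snu] := (rsummable_pos su, rsummable_neg su).
have [spv snv] := (rsummable_pos sv, rsummable_neg sv).
rewrite (@rsum_repr D _ (fun x => rpos (u x) + rpos (v x))
                        (fun x => rneg (u x) + rneg (v x))).
- rewrite /rsum.
  under eq_esum do rewrite EFinD.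
  under [X in _ - fine X]eq_esum do rewrite EFinD.
  rewrite !esumD => [|x _|x _|x _|x _]; rewrite ?lee_fin ?rpos_ge0 //.
  rewrite !fineD ?rsummable_fin // => [|x _|x _|x _|x _]; rewrite ?rpos_ge0 //.
  lra.
- by move=> x _; rewrite addr_ge0 ?rpos_ge0.
- by move=> x _; rewrite addr_ge0 ?rpos_ge0.
- exact: rsummableD.
- exact: rsummableD.
- by move=> x _; have := rpos_sub_rneg (u x); have := rpos_sub_rneg (v x); lra.
Qed.

Lemma rsum_scale D u c : rsummable D u -> rsum D (fun x => c * u x) = c * rsum D u.
Proof.
move=> su.
have [spu snu] := (rsummable_pos su, rsummable_neg su).
have [fpu fnu] := (rsummable_fin (fun x _ => rpos_ge0 (u x)) spu,
                   rsummable_fin (fun x _ => rpos_ge0 (- u x)) snu).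
have [c0|c0] := leP 0 c.
  rewrite (@rsum_repr D _ (fun x => c * rpos (u x)) (fun x => c * rneg (u x))).
  - by rewrite !esumZl ?fineM // => [|x|x]; rewrite ?rpos_ge0 // /rsum /=; ring.
  - by move=> x _; rewrite mulr_ge0 ?rpos_ge0.
  - by move=> x _; rewrite mulr_ge0 ?rpos_ge0.
  - exact: rsummableZ.
  - exact: rsummableZ.
  - by move=> x _; rewrite -mulrBr rpos_sub_rneg.
have nc0 : 0 <= - c by rewrite oppr_ge0 ltW.
rewrite (@rsum_repr D _ (fun x => - c * rneg (u x)) (fun x => - c * rpos (u x))).
- by rewrite !esumZl ?fineM // => [|x|x]; rewrite ?rpos_ge0 // /rsum /=; ring.
- by move=> x _; rewrite mulr_ge0 ?rpos_ge0.
- by move=> x _; rewrite mulr_ge0 ?rpos_ge0.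
- exact: rsummableZ.
- exact: rsummableZ.
- by move=> x _; rewrite -[in LHS](rpos_sub_rneg (u x)); ring.
Qed.

Lemma rsum_sub D u v : rsummable D u -> rsummable D v ->
  rsum D (fun x => u x - v x) = rsum D u - rsum D v.
Proof.
move=> su sv.
rewrite (rsum_ext (v := fun x => u x + -1 * v x)) => [|x _]; last by ring.
by rewrite rsum_add ?rsum_scale ?mulN1r //; exact: rsummableZ.
Qed.

Lemma rsum_abs D u : rsummable D u ->
  `|rsum D u| <= fine (\esum_(x in D) (`|u x|)%:E)%E.
Proof.
move=> su.
have [fpu fnu] := (rsummable_fin (fun x _ => rpos_ge0 (u x)) (rsummable_pos su),
                   rsummable_fin (fun x _ => rpos_ge0 (- u x)) (rsummable_neg su)).
under eq_esum do rewrite -rpos_add_rneg EFinD.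
rewrite esumD => [|x _|x _]; rewrite ?lee_fin ?rpos_ge0 //.
rewrite fineD // /rsum.
have h1 := @fine_esum_ge0 D _ (fun x _ => rpos_ge0 (u x)).
have h2 := @fine_esum_ge0 D _ (fun x _ => rpos_ge0 (- u x)).
by rewrite ler_norml; apply/andP; split; lra.
Qed.

Lemma rsum_reindex (T' : choiceType) (P : set T') D (e : T' -> T) u :
  set_bij P D e -> rsum D u = rsum P (fun x => u (e x)).
Proof.
move=> b; rewrite /rsum (reindex_esum P D e) //.
by rewrite (reindex_esum P D e (fun x => (rneg (u x))%:E)).
Qed.

Lemma rsum_mkcond D u : (forall x, ~ D x -> u x = 0) -> rsum D u = rsum [set: T] u.
Proof.
move=> h; rewrite /rsum (esum_mkcond D) (esum_mkcond D (fun x => (rneg (u x))%:E)).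
congr (fine _ - fine _); apply: eq_esum => x _; case: ifP => // /negbT;
  rewrite notin_setE => /h ->; rewrite ?oppr0 maxxx //.
Qed.

Lemma rsum_single u x : (forall t, t != x -> u t = 0) -> rsum [set: T] u = u x.
Proof.
move=> h; rewrite /rsum !(esum_single (x := x)).
- exact: rpos_sub_rneg.
- by move=> t; rewrite lee_fin rpos_ge0.
- by move=> t /h ->; rewrite oppr0 maxxx.
- by move=> t; rewrite lee_fin rpos_ge0.
- by move=> t /h ->; rewrite maxxx.
Qed.

End RealSums.

Lemma rsum_blocks (R : realType) (T Z : choiceType) (D : set T) (u : T -> R)
  (k : T -> Z) : rsummable D u ->
  rsum D u = rsum [set: Z] (fun z => rsum (D `&` (fun x => k x = z)) u).
Proof.
move=> su; set Dz := fun z => D `&` (fun x => k x = z).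
have [spu snu] := (rsummable_pos su, rsummable_neg su).
have Epos := fine_esum_blocks k (fun x => rpos_ge0 (u x)) spu.
have Eneg := fine_esum_blocks k (fun x => rpos_ge0 (- u x)) snu.
have /fin_numPlt/andP[_ pos_lt] := rsummable_fin (fun x _ => rpos_ge0 (u x)) spu.
have /fin_numPlt/andP[_ neg_lt] := rsummable_fin (fun x _ => rpos_ge0 (- u x)) snu.
have ge0_block (r : T -> R) (z : Z) : 0 <= fine (\esum_(x in Dz z) (rpos (r x))%:E)%E.
  by apply: fine_esum_ge0 => x _; exact: rpos_ge0.
rewrite (rsum_repr (p := fun z => fine (\esum_(x in Dz z) (rpos (u x))%:E)%E)
   (q := fun z => fine (\esum_(x in Dz z) (rneg (u x))%:E)%E)).
- by rewrite Epos Eneg.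
- by move=> z _; exact: ge0_block.
- by move=> z _; exact: (ge0_block (fun x => - u x)).
- rewrite /rsummable (eq_esum (b := fun z => (fine (\esum_(x in Dz z) (rpos (u x))%:E))%:E)).
    by rewrite Epos.
  by move=> z _; rewrite ger0_norm ?ge0_block.
- rewrite /rsummable (eq_esum (b := fun z => (fine (\esum_(x in Dz z) (rneg (u x))%:E))%:E)).
    by rewrite Eneg.
  by move=> z _; rewrite ger0_norm ?(ge0_block (fun x => - u x)).
- by [].
Qed.


Section ComplexParts.
Variable R : realType.
Local Notation C := R[i].
Local Notation normc := (@Normc.normc R).

Lemma complex_ext (x y : C) :
  complex.Re x = complex.Re y -> complex.Im x = complex.Im y -> x = y.
Proof. by case: x => a b; case: y => c d /= -> ->. Qed.

Lemma ReD (x y : C) : complex.Re (x + y) = complex.Re x + complex.Re y.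
Proof. by case: x; case: y. Qed.

Lemma ImD (x y : C) : complex.Im (x + y) = complex.Im x + complex.Im y.
Proof. by case: x; case: y. Qed.

Lemma ReM (x y : C) :
  complex.Re (x * y) = complex.Re x * complex.Re y - complex.Im x * complex.Im y.
Proof. by case: x; case: y. Qed.

Lemma ImM (x y : C) :
  complex.Im (x * y) = complex.Re x * complex.Im y + complex.Im x * complex.Re y.
Proof. by case: x; case: y. Qed.

Lemma normc_ge0 (x : C) : 0 <= normc x.
Proof. by case: x => a b /=; rewrite sqrtr_ge0. Qed.

Lemma Re_le_normc (x : C) : `|complex.Re x| <= normc x.
Proof. by case: x => a b /=; rewrite -sqrtr_sqr ler_wsqrtr // lerDl sqr_ge0. Qed.

Lemma Im_le_normc (x : C) : `|complex.Im x| <= normc x.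
Proof. by case: x => a b /=; rewrite -sqrtr_sqr ler_wsqrtr // lerDr sqr_ge0. Qed.

Lemma normc_le_ReIm (x : C) : normc x <= `|complex.Re x| + `|complex.Im x|.
Proof.
case: x => a b /=.
rewrite -[X in _ <= X](ger0_norm (addr_ge0 (normr_ge0 a) (normr_ge0 b))) -sqrtr_sqr.
rewrite ler_wsqrtr // sqrrD !real_normK ?num_real //.
by have := mulr_ge0 (normr_ge0 a) (normr_ge0 b); rewrite mulr2n; lra.
Qed.

End ComplexParts.

(* ** Absolutely summable complex families.
   [csum] sums real and imaginary parts separately, so its
   properties are inherited from those of [rsum]. *)
Section ComplexSums.
Variables (R : realType) (T : choiceType).
Local Notation C := R[i].
Local Notation normc := (@Normc.normc R).
Implicit Types (D E : set T) (u v : T -> C).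

(* Absolute summability; [l1 a] is [csummable [set: cu2] a]. *)
Definition csummable D u := (\esum_(x in D) (normc (u x))%:E < +oo)%E.

Lemma csummable_bound D u (b : T -> R) : (forall x, D x -> normc (u x) <= b x) ->
  (\esum_(x in D) (b x)%:E < +oo)%E -> csummable D u.
Proof. by move=> h; apply: le_lt_trans; apply: le_esum => x Dx; rewrite lee_fin h. Qed.

Lemma csummable_fin D u : csummable D u ->
  (\esum_(x in D) (normc (u x))%:E)%E \is a fin_num.
Proof. by apply: esum_fin_num => x _; exact: normc_ge0. Qed.

Lemma csummable_Re D u : csummable D u -> rsummable D (fun x => complex.Re (u x)).
Proof.
by apply: le_lt_trans; apply: le_esum => x _; rewrite lee_fin Re_le_normc.
Qed.

Lemma csummable_Im D u : csummable D u -> rsummable D (fun x => complex.Im (u x)).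
Proof.
by apply: le_lt_trans; apply: le_esum => x _; rewrite lee_fin Im_le_normc.
Qed.

Lemma csummableD D u v : csummable D u -> csummable D v ->
  csummable D (fun x => u x + v x).
Proof.
move=> su sv; apply: (@csummable_bound _ _ (fun x => normc (u x) + normc (v x))).
  by move=> x _; exact: le_normcD.
under eq_esum do rewrite EFinD.
by rewrite esumD ?lte_add_pinfty // => *; rewrite lee_fin normc_ge0.
Qed.

Lemma csummableZ D u c : csummable D u -> csummable D (fun x => c * u x).
Proof.
move=> su; rewrite /csummable.
under eq_esum do rewrite Normc.normcM.
rewrite esumZl ?normc_ge0 //; last by move=> x; exact: normc_ge0.
by apply: lte_mul_pinfty => //; rewrite lee_fin normc_ge0.
Qed.

Lemma csummableB D u v : csummable D u -> csummable D v ->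
  csummable D (fun x => u x - v x).
Proof.
move=> su sv; apply: csummableD => //.
by apply: csummable_bound sv => x _; rewrite normcN.
Qed.

Lemma csummable_subset D E u : E `<=` D -> csummable D u -> csummable E u.
Proof. by move=> ED; apply: le_lt_trans; apply: esum_subset => // x; rewrite lee_fin normc_ge0. Qed.

Lemma csummable_mul_bounded D u (f : T -> C) B :
  0 <= B -> (forall x, D x -> normc (f x) <= B) -> csummable D u ->
  csummable D (fun x => u x * f x).
Proof.
move=> B0 hf su; apply: (@csummable_bound _ _ (fun x => B * normc (u x))).
  move=> x Dx; rewrite Normc.normcM mulrC ler_wpM2r ?normc_ge0 //; exact: hf.
by rewrite esumZl //; [exact: lte_mul_pinfty|move=> x; exact: normc_ge0].
Qed.

Lemma esum_mul_bounded_le D u (f : T -> C) B :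
  0 <= B -> (forall x, D x -> normc (f x) <= B) -> csummable D u ->
  fine (\esum_(x in D) (normc (u x * f x))%:E)%E <=
  B * fine (\esum_(x in D) (normc (u x))%:E)%E.
Proof.
move=> B0 hf su; have fu := csummable_fin su.
have ZE := esumZl D (fun x => normc_ge0 (u x)) B0.
have -> : B * fine (\esum_(x in D) (normc (u x))%:E)%E =
          fine (\esum_(x in D) (B * normc (u x))%:E)%E by rewrite ZE fineM.
apply: fine_le; first exact: csummable_fin (csummable_mul_bounded B0 hf su).
  by rewrite ZE fin_numM.
apply: le_esum => x Dx; rewrite lee_fin Normc.normcM mulrC ler_wpM2r ?normc_ge0 //.
exact: hf.
Qed.

Lemma csum_ext D u v : (forall x, D x -> u x = v x) -> csum D u = csum D v.
Proof. by move=> e; apply: complex_ext => /=; apply: rsum_ext => x Dx; rewrite e. Qed.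

Lemma csum_add D u v : csummable D u -> csummable D v ->
  csum D (fun x => u x + v x) = csum D u + csum D v.
Proof.
move=> su sv; apply: complex_ext; rewrite ?ReD ?ImD /=.
- under rsum_ext do rewrite ReD.
  by rewrite rsum_add //; apply: csummable_Re.
- under rsum_ext do rewrite ImD.
  by rewrite rsum_add //; apply: csummable_Im.
Qed.

Lemma csum_scale D u c : csummable D u -> csum D (fun x => c * u x) = c * csum D u.
Proof.
move=> su; have [sr si] := (csummable_Re su, csummable_Im su).
apply: complex_ext; rewrite ?ReM ?ImM /=.
- under rsum_ext do rewrite ReM.
  by rewrite rsum_sub ?rsum_scale //; apply: rsummableZ.
- under rsum_ext do rewrite ImM.
  by rewrite rsum_add ?rsum_scale //; apply: rsummableZ.
Qed.

Lemma csum_scaler D u c : csummable D u -> csum D (fun x => u x * c) = csum D u * c.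
Proof. by move=> su; rewrite mulrC -csum_scale //; apply: csum_ext => x _; rewrite mulrC. Qed.

Lemma csum_sub D u v : csummable D u -> csummable D v ->
  csum D (fun x => u x - v x) = csum D u - csum D v.
Proof.
move=> su sv; have sNv := csummableZ (-1) sv.
rewrite (csum_ext (v := fun x => u x + -1 * v x)) => [|x _]; last by rewrite mulN1r.
by rewrite csum_add // csum_scale // mulN1r.
Qed.

Lemma csum0 D : csum D (fun _ => 0 : C) = 0.
Proof. by apply: complex_ext => /=; rewrite rsum0. Qed.

Lemma csum_reindex (T' : choiceType) (P : set T') D (e : T' -> T) u :
  set_bij P D e -> csum D u = csum P (fun x => u (e x)).
Proof. by move=> b; apply: complex_ext => /=; rewrite (rsum_reindex _ b). Qed.

Lemma csum_mkcond D u : (forall x, ~ D x -> u x = 0) -> csum D u = csum [set: T] u.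
Proof. by move=> h; apply: complex_ext => /=; rewrite rsum_mkcond // => x /h ->. Qed.

Lemma csum_single u x : (forall t, t != x -> u t = 0) -> csum [set: T] u = u x.
Proof.
by move=> h; apply: complex_ext => /=; rewrite (rsum_single (x := x)) // => t /h ->.
Qed.

(* The real part of a sum is bounded by the sum of the moduli; for the
   modulus itself we only need the cruder bound with a factor 2. *)
Lemma Re_csum_le D u : csummable D u ->
  `|complex.Re (csum D u)| <= fine (\esum_(x in D) (normc (u x))%:E)%E.
Proof.
move=> su /=; apply: le_trans (rsum_abs (csummable_Re su)) _.
have fin := esum_fin_num (fun x _ => normr_ge0 (complex.Re (u x))) (csummable_Re su).
apply: fine_le fin (csummable_fin su) _.
by apply: le_esum => x _; rewrite lee_fin Re_le_normc.
Qed.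

Lemma Im_csum_le D u : csummable D u ->
  `|complex.Im (csum D u)| <= fine (\esum_(x in D) (normc (u x))%:E)%E.
Proof.
move=> su /=; apply: le_trans (rsum_abs (csummable_Im su)) _.
have fin := esum_fin_num (fun x _ => normr_ge0 (complex.Im (u x))) (csummable_Im su).
apply: fine_le fin (csummable_fin su) _.
by apply: le_esum => x _; rewrite lee_fin Im_le_normc.
Qed.

Lemma normc_csum_le D u : csummable D u ->
  normc (csum D u) <= 2 * fine (\esum_(x in D) (normc (u x))%:E)%E.
Proof.
move=> su; apply: le_trans (normc_le_ReIm _) _.
by have := Re_csum_le su; have := Im_csum_le su; lra.
Qed.

End ComplexSums.

Lemma csum_blocks (R : realType) (T Z : choiceType) (D : set T) (u : T -> R[i])
    (k : T -> Z) : csummable D u ->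
  csum D u = csum [set: Z] (fun z => csum (D `&` (fun x => k x = z)) u).
Proof.
move=> su; apply: complex_ext => /=; rewrite (rsum_blocks k) //.
- exact: csummable_Re.
- exact: csummable_Im.
Qed.

Lemma csummable_prod (R : realType) (T1 T2 : choiceType) (u : T1 -> R[i])
    (v : T2 -> R[i]) :
  csummable [set: T1] u -> csummable [set: T2] v ->
  csummable [set: T1 * T2] (fun p => u p.1 * v p.2).
Proof.
move=> su sv; rewrite /csummable.
have -> : [set: T1 * T2] = [set: T1] `*`` (fun _ => [set: T2]).
  by apply/seteqP; split => // -[].
under eq_esum do rewrite Normc.normcM.
rewrite -(esum_esum (a := fun x y => (Normc.normc (u x) * Normc.normc (v y))%:E));
  last by move=> x y _ _; rewrite lee_fin mulr_ge0 ?normc_ge0.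
have fv := csummable_fin sv.
set Sv := fine (\esum_(y in [set: T2]) (Normc.normc (v y))%:E)%E.
have Sv0 : 0 <= Sv by apply: fine_esum_ge0 => y _; exact: normc_ge0.
rewrite (eq_esum (b := fun x => (Sv * Normc.normc (u x))%:E)) => [|x _].
  rewrite esumZl //; [exact: lte_mul_pinfty|by move=> x; exact: normc_ge0].
rewrite esumZl; [|by move=> y; exact: normc_ge0|exact: normc_ge0].
by rewrite -(fineK fv) -EFinM mulrC.
Qed.

(* ** The Cantor space {1,2}^N of infinite words (letter 1 = [false]). *)
Definition stream := nat -> bool.

Fixpoint is_prefix (w : word) (y : stream) : bool :=
  if w is b :: w' then (y 0%N == b) && is_prefix w' (fun n => y n.+1) else true.

Definition shift (k : nat) (y : stream) : stream := fun n => y (n + k)%N.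

Definition scat (w : word) (y : stream) : stream :=
  fun n => if (n < size w)%N then nth false w n else y (n - size w)%N.

Lemma shift0 y : shift 0 y = y.
Proof. by apply: boolp.funext => n; rewrite /shift addn0. Qed.

Lemma scat_nil y : scat [::] y = y.
Proof. by apply: boolp.funext => n; rewrite /scat /= subn0. Qed.

Lemma shift_scat w y : shift (size w) (scat w y) = y.
Proof. by apply: boolp.funext => n; rewrite /shift /scat ltnNge leq_addl /= addnK. Qed.

Lemma shift_shift m n y : shift m (shift n y) = shift (n + m) y.
Proof. by apply: boolp.funext => k; rewrite /shift -addnA (addnC m). Qed.

Lemma scat_cat a b y : scat (a ++ b) y = scat a (scat b y).
Proof.
apply: boolp.funext => n; rewrite /scat nth_cat size_cat.
have [na|na] := ltnP n (size a); first by rewrite ifT //; lia.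
have [nb|nb] := ltnP (n - size a) (size b); first by rewrite ifT //; lia.
by rewrite ifF ?subnDA //; lia.
Qed.

Lemma scat_cons_tail c a y : (fun n => scat (c :: a) y n.+1) = scat a y.
Proof. by apply: boolp.funext => n; rewrite /scat /= ltnS subSS. Qed.

Lemma is_prefix_cat a b y :
  is_prefix (a ++ b) y = is_prefix a y && is_prefix b (shift (size a) y).
Proof.
elim: a y => [|c a IH] y /=; first by rewrite shift0.
rewrite IH andbA; congr (_ && is_prefix b _).
by apply: boolp.funext => n; rewrite /shift addnS.
Qed.

Lemma is_prefix_scat a y : is_prefix a (scat a y).
Proof. by elim: a y => [|c a IH] y //=; rewrite scat_cons_tail IH andbT /scat /=. Qed.

Lemma is_prefix_scat_incomparable a b y :
  ~~ prefix a b -> ~~ prefix b a -> is_prefix a (scat b y) = false.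
Proof.
elim: a b => [|c a IH] [|d b] //=; rewrite ?prefix0s // => h1 h2.
rewrite scat_cons_tail [scat _ _ 0]/scat /=.
case: eqP => [ed|] //=; subst d.
by apply: IH; move: h1 h2; rewrite ?prefix_cons eqxx.
Qed.

(* ** A representation of Cu_2 on functions on the Cantor space.
   [s_mu s_nu^*] maps [phi] to [y |-> phi (nu shift^|mu| y)] when [mu] is a
   prefix of [y], and to [0] otherwise: [s_i] prepends the letter [i] and
   [s_i^*] deletes it. *)
Section CantorAction.
Variable R : realType.
Local Notation C := R[i].
Local Notation normc := (@Normc.normc R).

Definition act (t : cu2) (phi : stream -> C) (y : stream) : C :=
  if is_prefix t.1 y then phi (scat t.2 (shift (size t.1) y)) else 0.

Lemma act_mul x w phi y : act x (act w phi) y =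
  if cu2_mul x w is Some z then act z phi y else 0.
Proof.
case: x => mu nu; case: w => al be; rewrite /cu2_mul /act /=.
have [/prefixP [ga ->]|nu_al] := boolP (prefix nu al).
  rewrite drop_size_cat // is_prefix_cat is_prefix_scat /= shift_scat is_prefix_cat.
  rewrite size_cat -shift_shift shift_scat shift_shift size_cat.
  by case: (is_prefix mu y).
have [/prefixP [ga ->]|al_nu] := boolP (prefix al nu).
  rewrite drop_size_cat // scat_cat is_prefix_scat shift_scat scat_cat.
  by case: (is_prefix mu y).
by rewrite is_prefix_scat_incomparable //; case: (is_prefix mu y).
Qed.

Lemma act_e phi y : act cu2_e phi y = phi y.
Proof. by rewrite /act /= shift0 scat_nil. Qed.

Lemma act_sstar w phi y : act (cu2_sstar w) phi y = phi (scat w y).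
Proof. by rewrite /act /= shift0. Qed.

Lemma act_proj b phi y : act (cu2_proj [:: b]) phi y = if y 0%N == b then phi y else 0.
Proof.
rewrite /act /= andbT; case: eqP => // <-; congr phi.
by apply: boolp.funext => -[|n]; rewrite /scat /shift //= subn1 addn1.
Qed.

Lemma act_f0 phi y :
  act cu2_e phi y - act (cu2_proj [:: false]) phi y - act (cu2_proj [:: true]) phi y = 0.
Proof. by rewrite act_e !act_proj; case: (y 0%N); rewrite /= ?subr0 subrr ?subr0. Qed.

Lemma act0 t y : act t (fun _ => 0) y = 0.
Proof. by rewrite /act; case: ifP. Qed.

Lemma act_le t phi B y : (forall y, normc (phi y) <= B) -> normc (act t phi y) <= B.
Proof.
move=> h; rewrite /act; case: ifP => _ //.
by rewrite Normc.normc0; apply: le_trans (h y); exact: normc_ge0.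
Qed.

End CantorAction.

Definition mul_defined : set (cu2 * cu2) := [set p | cu2_mul p.1 p.2 != None].
Definition mul_fibre (z : cu2) : set (cu2 * cu2) := [set p | cu2_mul p.1 p.2 = Some z].

(* A total version of the product, used to index the blocks of [mul_defined]. *)
Definition mul_total (p : cu2 * cu2) : cu2 := odflt cu2_e (cu2_mul p.1 p.2).

Lemma mul_fibreE z : mul_defined `&` (fun p => mul_total p = z) = mul_fibre z.
Proof.
apply/seteqP; split => p; rewrite /mul_defined /mul_total /mul_fibre /=.
  by case: (cu2_mul p.1 p.2) => [z'|] [] //= _ ->.
by move=> ->.
Qed.

Section Fibres.
Variable R : realType.
Local Notation C := R[i].
Local Notation normc := (@Normc.normc R).

Lemma esum_fibres (a : cu2 * cu2 -> \bar R) : (forall p, 0 <= a p)%E ->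
  (\esum_(z in [set: cu2]) \esum_(p in mul_fibre z) a p = \esum_(p in mul_defined) a p)%E.
Proof.
by move=> a0; rewrite (esum_blocks _ mul_total) //; apply: eq_esum => z _; rewrite mul_fibreE.
Qed.

Lemma csum_fibres (H : cu2 * cu2 -> C) : csummable [set: cu2 * cu2] H ->
  (forall p, cu2_mul p.1 p.2 = None -> H p = 0) ->
  csum [set: cu2] (fun z => csum (mul_fibre z) H) = csum [set: cu2 * cu2] H.
Proof.
move=> sH H0; rewrite -(csum_mkcond (D := mul_defined)); last first.
  by move=> p /negP; rewrite negbK => /eqP /H0.
rewrite (csum_blocks mul_total); last exact: csummable_subset sH.
by apply: csum_ext => z _; rewrite mul_fibreE.
Qed.

Lemma l1_conv (a b : cu2 -> C) : l1 a -> l1 b -> l1 (conv a b).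
Proof.
move=> la lb; have sab := csummable_prod la lb.
have sfib z : csummable (mul_fibre z) (fun p => a p.1 * b p.2).
  exact: csummable_subset sab.
apply: (@csummable_bound _ _ _ _
  (fun z => 2 * fine (\esum_(p in mul_fibre z) (normc (a p.1 * b p.2))%:E)%E)).
  by move=> z _; exact: (normc_csum_le (sfib z)).
rewrite esumZl //; last by move=> z; apply: fine_esum_ge0 => p _; exact: normc_ge0.
apply: lte_mul_pinfty => //.
under eq_esum do rewrite fineK ?csummable_fin //.
rewrite esum_fibres => [|p]; last by rewrite lee_fin normc_ge0.
by apply: le_lt_trans sab; apply: esum_subset => // p; rewrite lee_fin normc_ge0.
Qed.

End Fibres.

(* ** The representation of A on bounded functions on the Cantor space.
   [rep g phi y] is [(pi(g) phi)(y)] where [pi(g) = sum_t g(t) act t]. *)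
Section Representation.
Variable R : realType.
Local Notation C := R[i].
Local Notation normc := (@Normc.normc R).
Implicit Types (a b g h : cu2 -> C) (phi : stream -> C).

Definition bounded phi := exists B, forall y, normc (phi y) <= B.

Definition rep g phi (y : stream) : C := csum [set: cu2] (fun t => g t * act t phi y).

Lemma bound_ge0 phi B : (forall y, normc (phi y) <= B) -> 0 <= B.
Proof. by move=> h; apply: le_trans (h (fun _ => false)); exact: normc_ge0. Qed.

Lemma csummable_rep g phi B y : l1 g -> (forall y, normc (phi y) <= B) ->
  csummable [set: cu2] (fun t => g t * act t phi y).
Proof. by move=> lg hB; apply: csummable_mul_bounded (bound_ge0 hB) _ lg => t _; exact: act_le. Qed.

Lemma Re_rep_le g phi B y : l1 g -> (forall y, normc (phi y) <= B) ->
  `|complex.Re (rep g phi y)| <= B * l1norm g.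
Proof.
move=> lg hB; apply: le_trans (Re_csum_le (csummable_rep y lg hB)) _.
by apply: esum_mul_bounded_le (bound_ge0 hB) _ lg => t _; exact: act_le.
Qed.

Lemma normc_rep_le g phi B y : l1 g -> (forall y, normc (phi y) <= B) ->
  normc (rep g phi y) <= 2 * (B * l1norm g).
Proof.
move=> lg hB; apply: le_trans (normc_csum_le (csummable_rep y lg hB)) _.
rewrite ler_pM2l //; apply: esum_mul_bounded_le (bound_ge0 hB) _ lg => t _.
exact: act_le.
Qed.

Lemma rep_bounded g phi : l1 g -> bounded phi -> bounded (rep g phi).
Proof. by move=> lg [B hB]; exists (2 * (B * l1norm g)) => y; exact: normc_rep_le. Qed.

Lemma rep_add g h phi y : l1 g -> l1 h -> bounded phi ->
  rep (fun t => g t + h t) phi y = rep g phi y + rep h phi y.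
Proof.
move=> lg lh [B hB]; rewrite /rep -csum_add ?(csummable_rep y _ hB) //.
by apply: csum_ext => t _; rewrite mulrDl.
Qed.

Lemma rep_sub g h phi y : l1 g -> l1 h -> bounded phi ->
  rep (fun t => g t - h t) phi y = rep g phi y - rep h phi y.
Proof.
move=> lg lh [B hB]; rewrite /rep -csum_sub ?(csummable_rep y _ hB) //.
by apply: csum_ext => t _; rewrite mulrBl.
Qed.

Lemma rep_scale c g phi y : l1 g -> bounded phi ->
  rep (fun t => c * g t) phi y = c * rep g phi y.
Proof.
move=> lg [B hB]; rewrite /rep -csum_scale ?(csummable_rep y _ hB) //.
by apply: csum_ext => t _; rewrite mulrA.
Qed.

Lemma rep_ext g h phi y : (forall t, g t = h t) -> rep g phi y = rep h phi y.
Proof. by move=> e; apply: csum_ext => t _; rewrite e. Qed.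

Lemma rep_zero phi y : rep (fun _ => 0) phi y = 0.
Proof. by rewrite /rep (csum_ext (v := fun _ => 0)) ?csum0 // => t _; rewrite mul0r. Qed.

Lemma rep_zero_fun g y : rep g (fun _ => 0) y = 0.
Proof. by rewrite /rep (csum_ext (v := fun _ => 0)) ?csum0 // => t _; rewrite act0 mulr0. Qed.

Lemma rep_delta s phi y : rep (delta R s) phi y = act s phi y.
Proof.
rewrite /rep (csum_single (x := s)) => [|t ts]; first by rewrite /delta eqxx mul1r.
by rewrite /delta (negbTE ts) mul0r.
Qed.

Lemma act_rep x b phi y :
  act x (rep b phi) y = csum [set: cu2] (fun w => b w * act x (act w phi) y).
Proof.
rewrite [LHS]/act; under [RHS]csum_ext do rewrite [act x _ y]/act.
case: ifP => _ //; by rewrite (csum_ext (v := fun _ => 0)) ?csum0 // => w _; rewrite mulr0.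
Qed.

Lemma rep_conv a b phi y : l1 a -> l1 b -> bounded phi ->
  rep (conv a b) phi y = rep a (rep b phi) y.
Proof.
move=> la lb [B hB]; have B0 := bound_ge0 hB.
pose H p := a p.1 * b p.2 * act p.1 (act p.2 phi) y.
have actB x w : normc (act x (act w phi) y) <= B by apply: act_le => y'; exact: act_le.
have sab := csummable_prod la lb.
have sH : csummable [set: cu2 * cu2] H.
  by apply: csummable_mul_bounded B0 _ sab => p _; exact: actB.
have -> : rep (conv a b) phi y = csum [set: cu2] (fun z => csum (mul_fibre z) H).
  apply: csum_ext => z _; rewrite -csum_scaler; last exact: csummable_subset sab.
  by apply: csum_ext => p hp; rewrite /H act_mul hp.
rewrite csum_fibres // => [|p hp]; last by rewrite /H act_mul hp mulr0.
rewrite (csum_blocks fst) //; apply: csum_ext => x _.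
rewrite (csum_reindex (P := [set: cu2]) (e := fun w => (x, w))); last first.
  by split => [w _ //|w1 w2 _ _ [] //|[x' w] [_ /= ->]]; exists w.
rewrite act_rep -csum_scale; last first.
  by apply: csummable_mul_bounded B0 _ lb => w _; exact: actB.
by apply: csum_ext => w _; rewrite /H mulrA.
Qed.

End Representation.

(* ** The kernel of the representation is a closed ideal containing [f0]. *)
Section Kernel.
Variable R : realType.
Local Notation C := R[i].
Local Notation normc := (@Normc.normc R).

Definition rep_kernel : set (cu2 -> C) :=
  [set g | l1 g /\ forall phi, bounded phi -> forall y, rep g phi y = 0].

(* Being contractive, [pi] vanishes on limits of elements of its kernel. *)
Lemma rep_kernel_closed (a : cu2 -> C) : l1 a ->
  (forall eps : R, 0 < eps -> exists2 g, rep_kernel g & l1norm (fun t => a t - g t) < eps) ->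
  rep_kernel a.
Proof.
move=> la approx; split => // phi [B hB] y.
have hB1 y' : normc (phi y') <= B + 1.
  by apply: le_trans (hB y') _; rewrite lerDl.
have B1 : 0 < B + 1 by have := bound_ge0 hB; lra.
apply: Normc.eq0_normc; apply/eqP; rewrite eq_le normc_ge0 andbT.
apply/ler_addgt0Pr => e e0; rewrite add0r.
have d0 : 0 < e / (2 * (B + 1)) by rewrite divr_gt0 // mulr_gt0.
have [g [lg kg] ag] := approx _ d0.
have lag : l1 (fun t => a t - g t) by exact: csummableB.
have -> : rep a phi y = rep (fun t => a t - g t) phi y.
  by rewrite rep_sub ?kg ?subr0 //; exists B.
apply: le_trans (normc_rep_le y lag hB1) _.
have de : 2 * (B + 1) * (e / (2 * (B + 1))) = e by field; lra.
by nra.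
Qed.

Lemma rep_kernel_closed_ideal : closed_ideal rep_kernel.
Proof.
split.
- by move=> g [].
- split.
    split; last by move=> phi _ y; exact: rep_zero.
    by rewrite /l1 (eq_esum (b := fun _ => 0%E)) ?esum1 // => t _; rewrite Normc.normc0.
  move=> g h [lg kg] [lh kh]; split; first exact: csummableD.
  by move=> phi bphi y; rewrite rep_add // kg // kh // addr0.
- move=> c g [lg kg]; split; first exact: csummableZ.
  by move=> phi bphi y; rewrite rep_scale // kg // mulr0.
- move=> a g la [lg kg]; split; split; try exact: l1_conv.
  + move=> phi bphi y; rewrite rep_conv //.
    by rewrite (_ : rep g phi = fun _ => 0) ?rep_zero_fun //; apply: boolp.funext => y'; exact: kg.
  + by move=> phi bphi y; rewrite rep_conv // kg //; exact: rep_bounded.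
- exact: rep_kernel_closed.
Qed.

Lemma esum_normc_delta s : (\esum_(t in [set: cu2]) (normc (delta R s t))%:E = 1)%E.
Proof.
rewrite (esum_single (x := s)) => [|t|t ts]; rewrite /delta ?eqxx ?Normc.normc1 //.
  by rewrite lee_fin normc_ge0.
by rewrite (negbTE ts) Normc.normc0.
Qed.

Lemma l1_delta s : l1 (delta R s).
Proof. by rewrite /l1 esum_normc_delta ltry. Qed.

Lemma f0_in_rep_kernel : rep_kernel (f0 R).
Proof.
have l1e := l1_delta cu2_e; have l1p b := l1_delta (cu2_proj [:: b]).
have l1ep : l1 (fun t => delta R cu2_e t - delta R (cu2_proj [:: false]) t).
  exact: (csummableB l1e (l1p false)).
split; first exact: (csummableB l1ep (l1p true)).
by move=> phi bphi y; rewrite /f0 !rep_sub // !rep_delta act_f0.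
Qed.

Lemma Jideal_sub_rep_kernel : @Jideal R `<=` rep_kernel.
Proof. by move=> g Jg; apply: Jg; [exact: rep_kernel_closed_ideal|exact: f0_in_rep_kernel]. Qed.

End Kernel.

Section QuotientNorm.
Variable R : realType.
Local Notation C := R[i].
Local Notation normc := (@Normc.normc R).

Lemma Jideal0 : @Jideal R (fun _ => 0).
Proof. by move=> I [_ [h0 _] _ _ _] _. Qed.

Lemma quot_norm_eq (a : cu2 -> C) (r : R) : l1norm a <= r ->
  (forall g, Jideal g -> r <= l1norm (fun t => a t - g t)) -> quot_norm a = r.
Proof.
move=> ar lb; set S := [set l1norm (fun t => a t - g t) | g in @Jideal R].
have Sa : S (l1norm a).
  exists (fun _ => 0); first exact: Jideal0.
  by congr l1norm; apply: boolp.funext => t; rewrite subr0.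
have lbS : lbound S r by move=> _ [g Jg <-]; exact: lb.
apply/eqP; rewrite eq_le; apply/andP; split.
  by apply: le_trans (ge_inf _ Sa) ar; exists r.
by apply: lb_le_inf => //; exists (l1norm a).
Qed.

Lemma Re_rep_one_le (a g : cu2 -> C) y : l1 a -> Jideal g ->
  `|complex.Re (rep a (fun _ => 1) y)| <= l1norm (fun t => a t - g t).
Proof.
move=> la /Jideal_sub_rep_kernel [lg kg].
have one_le y' : normc ((fun _ : stream => 1 : C) y') <= 1 by rewrite Normc.normc1.
have bone : bounded (fun _ : stream => 1 : C) by exists 1.
have := Re_rep_le y (csummableB la lg) one_le.
by rewrite rep_sub // kg // subr0 mul1r.
Qed.

Definition sstar_sum (F : seq word) : cu2 -> C :=
  fun t => \sum_(w <- F) delta R (cu2_sstar w) t.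

Lemma esum_normc_sstar_sum_le F :
  (\esum_(t in [set: cu2]) (normc (sstar_sum F t))%:E <= (size F)%:R%:E)%E.
Proof.
elim: F => [|w F IH].
  by rewrite esum1 // => t _; rewrite /sstar_sum big_nil Normc.normc0.
apply: le_trans (_ : (\esum_(t in [set: cu2])
    ((normc (delta R (cu2_sstar w) t))%:E + (normc (sstar_sum F t))%:E) <= _)%E).
  by apply: le_esum => t _; rewrite /sstar_sum big_cons -EFinD lee_fin le_normcD.
rewrite esumD => [|t _|t _]; rewrite ?lee_fin ?normc_ge0 //.
by rewrite esum_normc_delta /= mulrS EFinD leeD2l.
Qed.

Lemma l1_sstar_sum F : l1 (sstar_sum F).
Proof. by apply: le_lt_trans (esum_normc_sstar_sum_le F) _; rewrite ltry. Qed.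

Lemma l1norm_sstar_sum_le F : l1norm (sstar_sum F) <= (size F)%:R.
Proof.
have fin := csummable_fin (l1_sstar_sum F).
by rewrite /l1norm -[leRHS]/(fine (size F)%:R%:E); apply: (fine_le fin _ (esum_normc_sstar_sum_le F)).
Qed.

Lemma Re_rep_sstar_sum F y : complex.Re (rep (sstar_sum F) (fun _ => 1) y) = (size F)%:R.
Proof.
have bone : bounded (fun _ : stream => 1 : C) by exists 1 => _; rewrite Normc.normc1.
elim: F => [|w F IH].
  by rewrite (rep_ext (h := fun _ => 0)) ?rep_zero // => t; rewrite /sstar_sum big_nil.
rewrite (rep_ext (h := fun t => delta R (cu2_sstar w) t + sstar_sum F t)) => [|t]; last first.
  by rewrite /sstar_sum big_cons.
rewrite rep_add; [|exact: l1_delta|exact: l1_sstar_sum|exact: bone].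
by rewrite ReD IH rep_delta act_sstar /= mulrS.
Qed.

End QuotientNorm.

Theorem proposition3p19 (R : realType) (F : seq word) :
  uniq F -> [::] \notin F ->
  quot_norm (fun t : cu2 => \sum_(w <- F) delta R (cu2_sstar w) t)
  = (size F)%:R.
Proof.
move=> _ _; apply: quot_norm_eq; first exact: l1norm_sstar_sum_le.
move=> g Jg; rewrite -(@Re_rep_sstar_sum R F (fun _ => false)).
exact: le_trans (ler_norm _) (Re_rep_one_le _ (l1_sstar_sum R F) Jg).
Qed.
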